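(* Let $\mathcal H$ be an $n$-dimensional Hilbert space and $N\ge n$. Then: (i) $\epsilon^{(1)}=\frac{n}{N}$, and $\mathcal F^{(1)}=\{(F,G): (F,G)\text{ is an }(N,n)\text{ dual pair with } \|f_i\|\,\|g_i\|=\frac nN \text{ for all } 1\le i\le N\}$. (ii) If $F$ is a tight frame for $\mathcal H$ with $N$ elements, then $(F,S_F^{-1}F)\in\mathcal F^{(1)}$ if and only if $F$ is an equal norm frame.
   Context: $\mathcal H$ is a complex Hilbert space of finite dimension $n$, inner product linear in the first argument. A finite sequence $F=\{f_i\}_{i=1}^N$ in $\mathcal H$ is a frame if there are constants $0<A\le B$ with $A\|f\|^2\le\sum_{i=1}^N|\langle f,f_i\rangle|^2\le B\|f\|^2$ for all $f\in\mathcal H$; it is tight if one can take $A=B$, and equal norm if $\|f_i\|$ is independent of $i$. The frame operator is $S_F f=\sum_{i=1}^N\langle f,f_i\rangle f_i$ (invertible, positive), and the canonical dual is $S_F^{-1}F=\{S_F^{-1}f_i\}_{i=1}^N$. A sequence $G=\{g_i\}_{i=1}^N$ is a dual of the frame $F$ if $f=\sum_{i=1}^N\langle f,g_i\rangle f_i$ for all $f\in\mathcal H$; then $(F,G)$ is called an $(N,n)$ dual pair. For $1\le m\le N$, $\mathcal A_m$ is the set of $m$-element subsets $\Lambda\subseteq\{1,\dots,N\}$, and the error operator is $E_{\Lambda,F,G}f=\sum_{i\in\Lambda}\langle f,f_i\rangle g_i$. With $\|T\|_{\mathcal F}=\sqrt{\operatorname{tr}(T^*T)}$ the Frobenius norm,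 set $\epsilon^{(m)}_{F,G}=\max_{\Lambda\in\mathcal A_m}\|E_{\Lambda,F,G}\|_{\mathcal F}$; $\epsilon^{(1)}=\inf\{\epsilon^{(1)}_{F,G}: (F,G)\text{ an }(N,n)\text{ dual pair for }\mathcal H\}$; $\mathcal F^{(1)}=\{(F,G):\epsilon^{(1)}_{F,G}=\epsilon^{(1)}\}$; and for $m>1$, $\epsilon^{(m)}=\inf\{\epsilon^{(m)}_{F,G}:(F,G)\in\mathcal F^{(m-1)}\}$, $\mathcal F^{(m)}=\{(F,G)\in\mathcal F^{(m-1)}:\epsilon^{(m)}_{F,G}=\epsilon^{(m)}\}$. *)

From HB Require Import structures.
From mathcomp Require Import all_boot all_order all_algebra.
From mathcomp Require Import all_classical all_reals.
From mathcomp Require Import complex.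
Set Implicit Arguments. Unset Strict Implicit. Unset Printing Implicit Defensive.
Import Order.TTheory GRing.Theory Num.Theory.
Local Open Scope ring_scope.

Section Frames.
Variable R : realType.
Local Notation C := R[i].

(* The Hilbert space H = C^n, vectors are column vectors. *)
(* inner product, linear in the first argument *)
Definition inner (n : nat) (x y : 'cV[C]_n) : C :=
  \sum_(k < n) x k 0 * conjc (y k 0).

Definition vnorm (n : nat) (x : 'cV[C]_n) : R :=
  Num.sqrt (complex.Re (inner x x)).

Definition adj (m p : nat) (T : 'M[C]_(m, p)) : 'M[C]_(p, m) :=
  map_mx (@conjc R) T^T.

(* Frobenius norm sqrt(tr(T^* T)) (the trace is real and nonnegative) *)
Definition frob (n : nat) (T : 'M[C]_n) : R :=
  Num.sqrt (complex.Re (\tr (adj T *m T))).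

Definition fseq (N n : nat) := 'I_N -> 'cV[C]_n.

Definition is_frame (N n : nat) (F : fseq N n) : Prop :=
  exists A B : R, 0 < A /\ A <= B /\
    forall f : 'cV[C]_n,
      A * vnorm f ^+ 2 <= \sum_(i < N) Normc.normc (inner f (F i)) ^+ 2 /\
      \sum_(i < N) Normc.normc (inner f (F i)) ^+ 2 <= B * vnorm f ^+ 2.

Definition is_tight_frame (N n : nat) (F : fseq N n) : Prop :=
  exists A : R, 0 < A /\
    forall f : 'cV[C]_n,
      \sum_(i < N) Normc.normc (inner f (F i)) ^+ 2 = A * vnorm f ^+ 2.

Definition equal_norm (N n : nat) (F : fseq N n) : Prop :=
  exists c : R, forall i, vnorm (F i) = c.

(* frame operator S_F, as the matrix of f |-> sum_i <f,f_i> f_i *)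
Definition frame_op (N n : nat) (F : fseq N n) : 'M[C]_n :=
  \sum_(i < N) F i *m adj (F i).

Definition canon_dual (N n : nat) (F : fseq N n) : fseq N n :=
  fun i => invmx (frame_op F) *m F i.

Definition is_dual (N n : nat) (F G : fseq N n) : Prop :=
  forall f : 'cV[C]_n, f = \sum_(i < N) inner f (G i) *: F i.

Definition dual_pair (N n : nat) (F G : fseq N n) : Prop :=
  is_frame F /\ is_dual F G.

(* error operator E_{Lambda,F,G}, as the matrix of f |-> sum_{i in L} <f,f_i> g_i *)
Definition err_op (N n : nat) (L : {set 'I_N}) (F G : fseq N n) : 'M[C]_n :=
  \sum_(i in L) G i *m adj (F i).

Definition eps_FG (N n : nat) (m : nat) (F G : fseq N n) : R :=
  \big[Num.max/0]_(L : {set 'I_N} | #|L| == m) frob (err_op L F G).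

Definition eps1 (N n : nat) : R :=
  inf [set e : R | exists F G : fseq N n, dual_pair F G /\ e = eps_FG 1 F G].

Definition optimal1 (N n : nat) (F G : fseq N n) : Prop :=
  dual_pair F G /\ eps_FG 1 F G = eps1 N n.

End Frames.

(* For a dual pair, tr (sum_i f_i g_i^* ) = tr I = n, so by Cauchy-Schwarz
   sum_i |f_i| |g_i| >= n.  The rank-one error operator f_i g_i^* has Frobenius
   norm |f_i| |g_i|, so eps^(1)_{F,G} is the largest of these N products, hence
   at least their mean n/N, with equality iff every product equals n/N.  The
   bound is attained by the harmonic frame (the first n rows of the normalized
   N x N Fourier matrix), an equal-norm Parseval frame.  For a tight frame
   S_F = A I, so |f_i| |S_F^-1 f_i| = |f_i|^2 / A while sum_i |f_i|^2 = tr S_F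
   = A n: all products equal n/N iff all norms are equal. *)

From HB Require Import structures.
From mathcomp Require Import all_boot all_order all_algebra.
From mathcomp Require Import all_classical all_reals.
From mathcomp Require Import complex cyclic separable cyclotomic.
From mathcomp Require Import ring lra.
Set Implicit Arguments. Unset Strict Implicit. Unset Printing Implicit Defensive.
Import Order.TTheory GRing.Theory Num.Theory.
Local Open Scope ring_scope.
Local Open Scope complex_scope.

Lemma prim_root_exists (F : numClosedFieldType) (N : nat) :
  (0 < N)%N -> {w : F | N.-primitive_root w}.
Proof.
move=> N_gt0; pose p : {poly F} := 'X^N - 1.
have [r p_split] := closed_field_poly_normal p.
rewrite (monicP (monicXnsubC 1 N_gt0)) scale1r in p_split.
have unity_r : all N.-unity_root r.
  by apply/allP => z; rewrite -root_prod_XsubC -p_split.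
have size_r : (N < (size r).+1)%N.
  by rewrite -(size_prod_XsubC r id) -p_split size_XnsubC.
have uniq_r : uniq r.
  by rewrite -separable_prod_XsubC -p_split separable_Xn_sub_1 // pnatr_eq0 -lt0n.
by apply/sigW; have /hasP[w _ ?] := has_prim_root N_gt0 unity_r uniq_r size_r; exists w.
Qed.

Lemma unity_root_norm (D : numDomainType) (N : nat) (z : D) :
  (0 < N)%N -> z ^+ N = 1 -> `|z| = 1.
Proof. by move=> N_gt0 zN; apply/eqP; rewrite -(pexpr_eq1 N_gt0) // -normrX zN normr1. Qed.

Lemma sum_expr_unity_root (D : idomainType) (N : nat) (z : D) :
  z ^+ N = 1 -> z != 1 -> \sum_(j < N) z ^+ j = 0.
Proof.
move=> zN z_neq1; apply/eqP.
by have /eqP := subrX1 z N; rewrite zN subrr eq_sym mulf_eq0 subr_eq0 (negPf z_neq1).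
Qed.

Lemma le_mul_of_quadratic_ge0 (T : realFieldType) (u v b : T) :
  0 <= u -> 0 <= v -> (forall r, 0 <= u ^+ 2 + 2 * r * b + r ^+ 2 * v ^+ 2) ->
  b <= u * v.
Proof.
move=> u_ge0 v_ge0 quad_ge0; have [v0|v_neq0] := eqVneq v 0.
  rewrite v0 mulr0 leNgt; apply/negP => b_gt0.
  have := quad_ge0 (- (u ^+ 2 + 1) / (2 * b)); rewrite v0.
  have -> : 2 * (- (u ^+ 2 + 1) / (2 * b)) * b = - (u ^+ 2 + 1) by field; rewrite gt_eqF.
  by rewrite expr0n mulr0 addr0; lra.
have v_gt0 : 0 < v by rewrite lt_def v_neq0.
have := quad_ge0 (- b / v ^+ 2).
have -> : u ^+ 2 + 2 * (- b / v ^+ 2) * b + (- b / v ^+ 2) ^+ 2 * v ^+ 2 = u ^+ 2 - (b / v) ^+ 2.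
  by field.
rewrite subr_ge0 -(ler_pdivrMr _ _ v_gt0); move: (b / v) => t t2_le.
rewrite (le_trans (ler_norm t)) // -(ler_pXn2r (isT : (0 < 2)%N)) ?nnegrE //.
by rewrite real_normK ?num_real.
Qed.

Section MaxMean.
Variables (T : realFieldType) (N : nat) (a : 'I_N -> T) (s : T).
Hypothesis s_le_sum : s <= \sum_i a i.

Lemma mean_le_bigmax : s / N%:R <= \big[Num.max/0]_i a i.
Proof.
have [N0|N_gt0] := posnP N.
  have -> : N%:R = 0 :> T by rewrite N0.
  by rewrite invr0 mulr0 bigmax_ge_id.
rewrite ler_pdivrMr ?ltr0n // (le_trans s_le_sum) //.
apply: le_trans (_ : \sum_(i < N) \big[Num.max/0]_j a j <= _).
  by apply: ler_sum => i _; rewrite le_bigmax.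
by rewrite sumr_const card_ord mulr_natr.
Qed.

Lemma bigmax_eq_mean : \big[Num.max/0]_i a i = s / N%:R -> forall i, a i = s / N%:R.
Proof.
move=> max_mean i; set m := s / N%:R in max_mean *.
have a_le_m j : 0 <= m - a j by rewrite subr_ge0 -max_mean le_bigmax.
have N_gt0 : (0 < N)%N := leq_ltn_trans (leq0n i) (ltn_ord i).
have sum0 : \sum_j (m - a j) = 0.
  apply/eqP; rewrite eq_le sumr_ge0 ?andbT // sumrB sumr_const card_ord.
  by rewrite -mulr_natr divfK ?pnatr_eq0 -?lt0n // subr_le0.
by have /eqP := psumr_eq0P (fun j _ => a_le_m j) sum0 (i := i) isT; rewrite subr_eq0 => /eqP.
Qed.

End MaxMean.

Lemma inf_eq_lbound_mem (T : realType) (E : set T) x : E x -> lbound E x -> inf E = x.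
Proof.
move=> Ex lbx; apply/le_anti; rewrite lb_le_inf ?andbT //; last by exists x.
by apply: ge_inf => //; exists x.
Qed.
Section InnerProduct.
Variable R : realType.
Local Notation C := R[i].
Implicit Types (n : nat) (c : C).

Lemma normc_sqrE (z : C) : (Normc.normc z ^+ 2)%:C = z * conjc z.
Proof. by rewrite -sqr_normc rmorphXn; case: z. Qed.

Lemma adjM m p q (A : 'M[C]_(m, p)) (B : 'M[C]_(p, q)) :
  adj (A *m B) = adj B *m adj A.
Proof. by rewrite /adj trmx_mul map_mxM. Qed.

Lemma adjK m p (A : 'M[C]_(m, p)) : adj (adj A) = A.
Proof. by apply/matrixP => i j; rewrite !mxE conjcK. Qed.

Lemma adjZ m p c (A : 'M[C]_(m, p)) : adj (c *: A) = conjc c *: adj A.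
Proof. by apply/matrixP => i j; rewrite !mxE rmorphM. Qed.

Lemma innerE n (x y : 'cV[C]_n) : inner x y = (adj y *m x) 0 0.
Proof. by rewrite !mxE; apply: eq_bigr => k _; rewrite !mxE mulrC. Qed.

Lemma mxtrace_mul_adj n (x y : 'cV[C]_n) : \tr (x *m adj y) = inner x y.
Proof. by rewrite mxtrace_mulC innerE /mxtrace big_ord1. Qed.

Lemma innerDl n (x y z : 'cV[C]_n) : inner (x + y) z = inner x z + inner y z.
Proof. by rewrite !innerE mulmxDr mxE. Qed.

Lemma innerDr n (x y z : 'cV[C]_n) : inner z (x + y) = inner z x + inner z y.
Proof. by rewrite /inner -big_split; apply: eq_bigr => k _; rewrite !mxE rmorphD mulrDr. Qed.

Lemma innerZl n c (x z : 'cV[C]_n) : inner (c *: x) z = c * inner x z.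
Proof. by rewrite !innerE -scalemxAr mxE. Qed.

Lemma innerZr n c (x z : 'cV[C]_n) : inner z (c *: x) = conjc c * inner z x.
Proof. by rewrite !innerE adjZ -scalemxAl mxE. Qed.

Lemma inner_suml n N (x : 'I_N -> 'cV[C]_n) z :
  inner (\sum_i x i) z = \sum_i inner (x i) z.
Proof. by rewrite innerE mulmx_sumr summxE; apply: eq_bigr => i _; rewrite innerE. Qed.

Lemma innerC n (x y : 'cV[C]_n) : inner y x = conjc (inner x y).
Proof. by rewrite rmorph_sum; apply: eq_bigr => k _; rewrite rmorphM /= conjcK mulrC. Qed.

Lemma vnorm_ge0 n (x : 'cV[C]_n) : 0 <= vnorm x.
Proof. exact: sqrtr_ge0. Qed.

Lemma inner_selfE n (x : 'cV[C]_n) : inner x x = (vnorm x ^+ 2)%:C.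
Proof.
have xxE : inner x x = (\sum_k Normc.normc (x k 0) ^+ 2)%:C.
  by rewrite rmorph_sum; apply: eq_bigr => k _; rewrite /= normc_sqrE.
by rewrite /vnorm xxE /= sqr_sqrtr // sumr_ge0 // => k _; rewrite sqr_ge0.
Qed.

Lemma vnormZ n (r : R) (x : 'cV[C]_n) : vnorm (r%:C *: x) = `|r| * vnorm x.
Proof.
rewrite {1}/vnorm innerZl innerZr conjc_real inner_selfE -!rmorphM /=.
by rewrite mulrA -expr2 -exprMn sqrtr_sqr normrM (ger0_norm (vnorm_ge0 x)).
Qed.

Lemma Re_realM (r : R) (z : C) : complex.Re (r%:C * z) = r * complex.Re z.
Proof. by case: z => a b /=; rewrite mul0r subr0. Qed.

Lemma Re_conjc (z : C) : complex.Re (conjc z) = complex.Re z.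
Proof. by case: z. Qed.

Lemma vnorm_addZ_sqr n (x y : 'cV[C]_n) (r : R) :
  vnorm (x + r%:C *: y) ^+ 2 =
  vnorm x ^+ 2 + 2 * r * complex.Re (inner x y) + r ^+ 2 * vnorm y ^+ 2.
Proof.
have /(congr1 (@complex.Re R)) /= <- := inner_selfE (x + r%:C *: y).
rewrite !(innerDl, innerDr, innerZl, innerZr) conjc_real (innerC y) !inner_selfE.
rewrite mulrA -rmorphM !raddfD /= !Re_realM Re_conjc; ring.
Qed.

Lemma Re_inner_le n (x y : 'cV[C]_n) : complex.Re (inner x y) <= vnorm x * vnorm y.
Proof.
apply: le_mul_of_quadratic_ge0; rewrite ?vnorm_ge0 // => r.
by rewrite -vnorm_addZ_sqr sqr_ge0.
Qed.

Lemma inner_delta n (v : 'cV[C]_n) a : inner v (delta_mx a 0) = v a 0.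
Proof.
rewrite /inner (bigD1 a) //= big1 => [|k /negPf k_neq_a]; rewrite !mxE.
  by rewrite eqxx conjc1 mulr1 addr0.
by rewrite k_neq_a conjc0 mulr0.
Qed.

Lemma inner_mulmx_self_eq0 n (T : 'M[C]_n) : (forall f, inner (T *m f) f = 0) -> T = 0.
Proof.
move=> Tff.
(* Polarization: expanding <T(x + c y), x + c y> = 0, then taking c = 1 and c = i. *)
have polar x y c : conjc c * inner (T *m x) y + c * inner (T *m y) x = 0.
  have := Tff (x + c *: y); rewrite mulmxDr -scalemxAr.
  by rewrite !(innerDl, innerDr, innerZl, innerZr) !Tff !mulr0 !addr0 add0r addrC.
have Txy x y : inner (T *m x) y = 0.
  have := polar x y 1; rewrite conjc1 !mul1r => /eqP; rewrite addr_eq0 => /eqP Tyx.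
  have := polar x y 'i%C; rewrite Tyx.
  have -> : conjc 'i%C = - 'i%C :> C by apply/eqP; rewrite eq_complex /= oppr0 !eqxx.
  rewrite mulrN mulNr opprK -mulr2n => /eqP.
  by rewrite mulrn_eq0 /= mulf_eq0 complexiE (negPf (@neq0Ci _)) => /eqP ->; rewrite oppr0.
apply/matrixP => a b; have := Txy (delta_mx b 0) (delta_mx a 0).
by rewrite inner_delta -colE !mxE.
Qed.

End InnerProduct.

Section OptimalDualPairs.
Variable R : realType.
Local Notation C := R[i].

Lemma frob_mul_adj n (f g : 'cV[C]_n) : frob (g *m adj f) = vnorm f * vnorm g.
Proof.
rewrite /frob adjM adjK !mulmxA -[f *m _ *m g]mulmxA [adj g *m g]mx11_scalar.
rewrite -innerE mul_mx_scalar -scalemxAl mxtraceZ mxtrace_mul_adj !inner_selfE.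
by rewrite -rmorphM /= -exprMn sqrtr_sqr ger0_norm ?mulr_ge0 ?vnorm_ge0 // mulrC.
Qed.

Lemma frob_err_op1 N n (F G : fseq R N n) i :
  frob (err_op [set i] F G) = vnorm (F i) * vnorm (G i).
Proof. by rewrite /err_op big_set1 frob_mul_adj. Qed.

Lemma eps1_FGE N n (F G : fseq R N n) :
  eps_FG 1 F G = \big[Num.max/0]_i (vnorm (F i) * vnorm (G i)).
Proof.
apply/le_anti/andP; split.
  apply: bigmax_le => [|L /cards1P[i ->]]; first exact: bigmax_ge_id.
  by rewrite frob_err_op1 le_bigmax.
apply: bigmax_le => [|i _]; first exact: bigmax_ge_id.
by rewrite -frob_err_op1 le_bigmax_cond ?cards1.
Qed.

Lemma dual_sumE N n (F G : fseq R N n) (f : 'cV[C]_n) :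
  \sum_i inner f (G i) *: F i = (\sum_i F i *m adj (G i)) *m f.
Proof.
rewrite mulmx_suml; apply: eq_bigr => i _.
by rewrite -mulmxA [adj _ *m f]mx11_scalar mul_mx_scalar innerE.
Qed.

Lemma is_dualP N n (F G : fseq R N n) :
  is_dual F G <-> \sum_i F i *m adj (G i) = 1%:M.
Proof.
split=> [dualFG|FG1 f]; last by rewrite dual_sumE FG1 mul1mx.
apply/matrixP => a b; have /(congr1 (fun v : 'cV[C]_n => v a 0)) := dualFG (delta_mx b 0).
by rewrite dual_sumE -colE !mxE andbT => <-.
Qed.

Lemma sum_inner_dual N n (F G : fseq R N n) :
  is_dual F G -> \sum_i inner (F i) (G i) = n%:R.
Proof.
move/is_dualP/(congr1 mxtrace); rewrite mxtrace1 raddf_sum /= => <-.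
by apply: eq_bigr => i _; rewrite mxtrace_mul_adj.
Qed.

Lemma dual_sum_vnormM_ge N n (F G : fseq R N n) :
  is_dual F G -> n%:R <= \sum_i vnorm (F i) * vnorm (G i).
Proof.
move/sum_inner_dual => sumFG.
have <- : complex.Re (n%:R : C) = n%:R by rewrite -(rmorph_nat (real_complex R)).
by rewrite -sumFG raddf_sum; apply: ler_sum => i _; apply: Re_inner_le.
Qed.

Lemma eps1_FG_ge N n (F G : fseq R N n) : is_dual F G -> n%:R / N%:R <= eps_FG 1 F G.
Proof. by move/dual_sum_vnormM_ge; rewrite eps1_FGE; apply: mean_le_bigmax. Qed.

Lemma eps1_FG_eqP N n (F G : fseq R N n) : is_dual F G ->
  eps_FG 1 F G = n%:R / N%:R <-> forall i, vnorm (F i) * vnorm (G i) = n%:R / N%:R.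
Proof.
move=> dualFG; split; first by rewrite eps1_FGE; apply/bigmax_eq_mean/dual_sum_vnormM_ge.
move=> prodE; apply/le_anti; rewrite eps1_FG_ge // andbT eps1_FGE.
by apply: bigmax_le => [|i _]; rewrite ?prodE // divr_ge0.
Qed.

Lemma frame_op_quad N n (F : fseq R N n) f :
  (\sum_i Normc.normc (inner f (F i)) ^+ 2)%:C = inner (frame_op F *m f) f.
Proof.
rewrite -dual_sumE inner_suml rmorph_sum; apply: eq_bigr => i _.
by rewrite /= normc_sqrE innerZl -innerC.
Qed.

Lemma parseval_dual_pair N n (F : fseq R N n) : frame_op F = 1%:M -> dual_pair F F.
Proof.
move=> F1; split; last exact/is_dualP.
exists 1, 1; split; first exact: ltr01; split=> // f.
have -> : \sum_i Normc.normc (inner f (F i)) ^+ 2 = vnorm f ^+ 2.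
  by apply: complexI; rewrite frame_op_quad F1 mul1mx inner_selfE.
by rewrite mul1r lexx.
Qed.

Section HarmonicFrame.
Variables (N n : nat) (w : C).
Hypothesis w_prim : N.-primitive_root w.

Definition harmonic_frame : fseq R N n :=
  fun j => (Num.sqrt N%:R^-1)%:C *: \col_(k < n) w ^+ (j * k).

Let N_gt0 : (0 < N)%N := prim_order_gt0 w_prim.

Let w_neq0 : w != 0.
Proof. by rewrite (prim_root_eq0 w_prim) -lt0n. Qed.

Let conjc_w : conjc w = w^-1.
Proof.
apply: (mulfI w_neq0); rewrite mulfV // -sqr_normc.
by rewrite (unity_root_norm N_gt0 (prim_expr_order w_prim)) expr1n.
Qed.

Lemma harmonic_frame_vnorm j : vnorm (harmonic_frame j) ^+ 2 = n%:R / N%:R.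
Proof.
apply: complexI; rewrite -inner_selfE innerZl innerZr conjc_real mulrA -rmorphM.
rewrite -expr2 sqr_sqrtr ?invr_ge0 ?ler0n // /inner (eq_bigr (fun=> 1)) => [|k _].
  by rewrite sumr_const card_ord /= -(rmorph_nat (real_complex R)) -rmorphM mulrC.
by rewrite !mxE rmorphXn /= conjc_w -exprMn mulfV ?expr1n.
Qed.

Lemma harmonic_frame_parseval : (n <= N)%N -> frame_op harmonic_frame = 1%:M.
Proof.
move=> n_le_N; apply/matrixP => k l; rewrite summxE.
pose z := w ^+ k / w ^+ l.
have entry j : (harmonic_frame j *m adj (harmonic_frame j)) k l = (N%:R^-1)%:C * z ^+ j.
  rewrite !mxE big_ord1 !mxE rmorphM rmorphXn /= oppr0 complexr0 conjc_w.
  rewrite mulrACA -rmorphM -expr2 sqr_sqrtr ?invr_ge0 ?ler0n //; congr (_ * _).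
  by rewrite /z exprMn !exprVn -!exprM mulnC [(l * j)%N]mulnC.
rewrite (eq_bigr _ (fun j _ => entry j)) -mulr_sumr !mxE.
have [kl|k_neq_l] := eqVneq k l.
  have z1 : z = 1 by rewrite /z kl divff // expf_neq0.
  rewrite z1 (eq_bigr (fun=> 1)) => [|j _]; last by rewrite expr1n.
  by rewrite sumr_const card_ord -(rmorph_nat (real_complex R)) -rmorphM mulVf ?pnatr_eq0 -?lt0n.
have z_neq1 : z != 1.
  apply: contra k_neq_l => /eqP z1; rewrite -(inj_eq val_inj) /=.
  have : w ^+ k == w ^+ l by rewrite -(divfK (expf_neq0 l w_neq0) (w ^+ k)) -/z z1 mul1r.
  by rewrite (eq_prim_root_expr w_prim) !modn_small // (leq_trans _ n_le_N).
have zN : z ^+ N = 1.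
  by rewrite exprMn exprVn -!exprM !(mulnC _ N) !exprM (prim_expr_order w_prim) !expr1n invr1 mulr1.
by rewrite sum_expr_unity_root // mulr0.
Qed.

End HarmonicFrame.

Lemma exists_equal_norm_parseval N n : (n <= N)%N ->
  exists F : fseq R N n, frame_op F = 1%:M /\ forall i, vnorm (F i) ^+ 2 = n%:R / N%:R.
Proof.
move=> n_le_N; have [N0|N_gt0] := posnP N.
  move: n_le_N; rewrite N0 leqn0 => /eqP n0; subst N n.
  by exists (fun=> 0); split=> [|[] //]; apply/matrixP => -[].
have [w w_prim] := prim_root_exists C N_gt0.
exists (harmonic_frame n w); split; last exact: harmonic_frame_vnorm.
exact: harmonic_frame_parseval.
Qed.

Lemma eps1E N n : (n <= N)%N -> eps1 R N n = n%:R / N%:R.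
Proof.
move=> n_le_N; apply: inf_eq_lbound_mem => [|_ [F [G [[_ dualFG] ->]]]]; last first.
  exact: eps1_FG_ge.
have [F [F1 normF]] := exists_equal_norm_parseval n_le_N.
have [frameF dualFF] := parseval_dual_pair F1.
exists F, F; split=> //; apply/esym/(eps1_FG_eqP dualFF) => i.
by rewrite -expr2 normF.
Qed.

Lemma optimal1P N n (F G : fseq R N n) : (n <= N)%N ->
  optimal1 F G <-> dual_pair F G /\ forall i, vnorm (F i) * vnorm (G i) = n%:R / N%:R.
Proof.
move=> n_le_N; rewrite /optimal1 eps1E //.
by split=> -[[frameF dualFG] epsFG]; split=> //; apply/(eps1_FG_eqP dualFG).
Qed.

End OptimalDualPairs.

Section TightFrames.
Variable R : realType.
Local Notation C := R[i].

Lemma tight_frame_opE N n (F : fseq R N n) (A : R) :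
  (forall f, \sum_i Normc.normc (inner f (F i)) ^+ 2 = A * vnorm f ^+ 2) ->
  frame_op F = (A%:C)%:M.
Proof.
move=> tightF; apply/eqP; rewrite -subr_eq0; apply/eqP/inner_mulmx_self_eq0 => f.
rewrite mulmxBl innerDl -scaleN1r innerZl -frame_op_quad tightF.
by rewrite mul_scalar_mx innerZl inner_selfE rmorphM mulN1r subrr.
Qed.

Lemma mxtrace_frame_op N n (F : fseq R N n) :
  \tr (frame_op F) = (\sum_i vnorm (F i) ^+ 2)%:C.
Proof.
rewrite raddf_sum rmorph_sum; apply: eq_bigr => i _.
by rewrite /= mxtrace_mul_adj inner_selfE.
Qed.

Lemma optimal1_canon_dualP N n (F : fseq R N n) : (n <= N)%N -> is_tight_frame F ->
  optimal1 F (canon_dual F) <-> equal_norm F.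
Proof.
move=> n_le_N [A [A_gt0 tightF]]; have SF := tight_frame_opE tightF.
have dualF i : canon_dual F i = (A^-1)%:C *: F i.
  by rewrite /canon_dual SF invmx_scalar mul_scalar_mx fmorphV.
have dual_pairF : dual_pair F (canon_dual F).
  split; first by exists A, A; split=> //; split=> // f; rewrite tightF lexx.
  apply/is_dualP; under eq_bigr => i _ do rewrite dualF adjZ -scalemxAr.
  by rewrite -scaler_sumr -/(frame_op F) SF conjc_real scale_scalar_mx -rmorphM mulVf ?gt_eqF.
have prodF i : vnorm (F i) * vnorm (canon_dual F i) = vnorm (F i) ^+ 2 / A.
  by rewrite dualF vnormZ ger0_norm ?invr_ge0 ?ltW // mulrCA -expr2 mulrC.
have sumF : \sum_i vnorm (F i) ^+ 2 = A * n%:R.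
  by apply: complexI; rewrite -mxtrace_frame_op SF mxtrace_scalar rmorphM rmorph_nat mulr_natr.
rewrite optimal1P //; split=> [[_ prodE]|[c normF]].
  exists (Num.sqrt (A * (n%:R / N%:R))) => i.
  have <- : vnorm (F i) ^+ 2 = A * (n%:R / N%:R).
    by rewrite -(prodE i) prodF mulrC divfK ?gt_eqF.
  by rewrite sqrtr_sqr ger0_norm ?vnorm_ge0.
split=> // i; rewrite prodF normF.
have N_gt0 : (0 < N)%N := leq_ltn_trans (leq0n i) (ltn_ord i).
have N_neq0 : N%:R != 0 :> R by rewrite pnatr_eq0 -lt0n.
have c2 : c ^+ 2 = A * n%:R / N%:R.
  rewrite -sumF (eq_bigr (fun=> c ^+ 2)) => [|j _]; last by rewrite normF.
  by rewrite sumr_const card_ord -(mulr_natr (c ^+ 2)) mulfK.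
by rewrite c2; field; rewrite N_neq0 gt_eqF.
Qed.

End TightFrames.

Theorem theorem3p1 (R : realType) (n N : nat) (hnN : (n <= N)%N) :
  (eps1 R N n = n%:R / N%:R /\
   forall F G : fseq R N n,
     optimal1 F G <->
     (dual_pair F G /\ forall i : 'I_N, vnorm (F i) * vnorm (G i) = n%:R / N%:R))
  /\
  (forall F : fseq R N n, is_tight_frame F ->
     (optimal1 F (canon_dual F) <-> equal_norm F)).
Proof.
split; first split.
- exact: eps1E.
- by move=> F G; apply: optimal1P.
- by move=> F; apply: optimal1_canon_dualP.
Qed.
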